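(* Let $\mathcal{M}=(S,A,\rho_0,\mathbb{P},c,\gamma)$ be an MDP and let $\pi,\pi'$ be policies such that $Q^{\pi'}_{cpt}(s,a)\le Q^\pi_{cpt}(s,a)$ for all $(s,a)\in S\times A$ and $\pi'$ is improved compared to $\pi$. Let $u^+,u^-,w^+,w^-$ be utility and weighting functions as in the CPT-value definition below. Then $(\mathcal{T}_{\pi'}Q^{\pi'}_{cpt})(s,a)\le(\mathcal{T}_\pi Q^\pi_{cpt})(s,a)$ for all $(s,a)\in S\times A$.
   Context: An MDP is a tuple $(S,A,\rho_0,\mathbb{P},c,\gamma)$ with finite state set $S$, finite action set $A$, initial distribution $\rho_0$, transition probabilities $\mathbb{P}(s'\mid s,a)$, cost $c(s,a)$ (a random variable with $|c|<\infty$), and discount factor $\gamma\in(0,1]$. A policy $\pi(\cdot\mid s)$ is a probability distribution over $A$ for each $s$. CPT-value: utility functions $u^+,u^-:\mathbb{R}\to\mathbb{R}_{\ge0}$ are continuous with bounded first moment, $u^+(x)=0$ for $x\le0$ and non-decreasing otherwise, $u^-(x)=0$ for $x\ge0$ and non-increasing otherwise; weighting functions $w^+,w^-:[0,1]\to[0,1]$ are Lipschitz continuous, non-decreasing, with $w^\pm(0)=0$, $w^\pm(1)=1$. For a random variable $Y$, $$\rho_{cpt}(Y)=\int_0^\infty w^+(\mathbb{P}(u^+(Y)>z))\,dz-\int_0^\infty w^-(\mathbb{P}(u^-(Y)>z))\,dz.$$ CPT-Q of $\pi$: $Q^\pi_{cpt}(s,a)=\rho_{cpt}\big(c(s,a)+\gamma\sum_{s'}\mathbb{P}(s'\mid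 s,a)\sum_{a'}\pi(a'\mid s')Q^\pi_{cpt}(s',a')\big)$; CPT-V: $V^\pi_{cpt}(s)=\sum_a\pi(a\mid s)Q^\pi_{cpt}(s,a)$. Policy $\pi'$ is improved compared to $\pi$ iff $V^{\pi'}_{cpt}(s)\le V^\pi_{cpt}(s)$ for all $s$. The CPT-Q-iteration operator is, for a function $Q:S\times A\to\mathbb{R}$, $$(\mathcal{T}_\pi Q)(s,a)=\rho_{cpt}\Big(c(s,a)+\gamma\sum_{s'}\mathbb{P}(s'\mid s,a)\sum_{a'}\pi(a'\mid s')Q(s',a')\Big).$$ *)

From HB Require Import structures.
From mathcomp Require Import all_boot all_order all_algebra.
From mathcomp Require Import all_classical all_reals all_analysis.
Set Implicit Arguments. Unset Strict Implicit. Unset Printing Implicit Defensive.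
Import Order.TTheory GRing.Theory Num.Theory numFieldNormedType.Exports.
Local Open Scope classical_set_scope.
Local Open Scope ring_scope.

Definition utility_pos (R : realType) (u : R -> R) : Prop :=
  [/\ continuous u, (forall x, 0 <= u x), (forall x, x <= 0 -> u x = 0)
    & (forall x y, 0 < x -> x <= y -> u x <= u y)].

Definition utility_neg (R : realType) (u : R -> R) : Prop :=
  [/\ continuous u, (forall x, 0 <= u x), (forall x, 0 <= x -> u x = 0)
    & (forall x y, x <= y -> y < 0 -> u y <= u x)].

Definition weighting (R : realType) (w : R -> R) : Prop :=
  [/\ (forall x, 0 <= x <= 1 -> 0 <= w x <= 1),
      (exists L : R, forall x y, 0 <= x <= 1 -> 0 <= y <= 1 ->
          `|w x - w y| <= L * `|x - y|),
      (forall x y, 0 <= x -> x <= y -> y <= 1 -> w x <= w y),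
      w 0 = 0 & w 1 = 1].

Definition rho_cpt (d : measure_display) (T : measurableType d) (R : realType)
  (P : probability T R) (up um wp wm : R -> R) (Y : T -> R) : \bar R :=
  ((\int[lebesgue_measure]_(z in `[0%R, +oo[%classic)
       (wp (fine (P [set t | z < up (Y t)])))%:E)
   - (\int[lebesgue_measure]_(z in `[0%R, +oo[%classic)
       (wm (fine (P [set t | z < um (Y t)])))%:E))%E.

Definition is_policy (R : realType) (S A : finType) (pi : S -> A -> R) : Prop :=
  forall s, (forall a, 0 <= pi s a) /\ \sum_(a : A) pi s a = 1.

Definition is_transition (R : realType) (S A : finType) (Pt : S -> A -> S -> R) : Prop :=
  forall s a, (forall s', 0 <= Pt s a s') /\ \sum_(s' : S) Pt s a s' = 1.

Definition cpt_T (d : measure_display) (T : measurableType d) (R : realType)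
  (P : probability T R) (up um wp wm : R -> R) (S A : finType)
  (Pt : S -> A -> S -> R) (c : S -> A -> T -> R) (gamma : R)
  (pi : S -> A -> R) (Q : S -> A -> R) (s : S) (a : A) : \bar R :=
  rho_cpt P up um wp wm
    (fun t => c s a t + gamma * \sum_(s' : S) Pt s a s' * \sum_(a' : A) pi s' a' * Q s' a').

Definition is_cpt_Q (d : measure_display) (T : measurableType d) (R : realType)
  (P : probability T R) (up um wp wm : R -> R) (S A : finType)
  (Pt : S -> A -> S -> R) (c : S -> A -> T -> R) (gamma : R)
  (pi : S -> A -> R) (Q : S -> A -> R) : Prop :=
  forall s a, (Q s a)%:E = cpt_T P up um wp wm Pt c gamma pi Q s a.

Definition cpt_V (R : realType) (S A : finType) (pi : S -> A -> R) (Q : S -> A -> R) (s : S) : R :=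
  \sum_(a : A) pi s a * Q s a.

From HB Require Import structures.
From mathcomp Require Import all_boot all_order all_algebra.
From mathcomp Require Import all_classical all_reals all_analysis.
From mathcomp Require Import measurable_realfun.
Set Implicit Arguments. Unset Strict Implicit. Unset Printing Implicit Defensive.
Import Order.TTheory GRing.Theory Num.Theory numFieldNormedType.Exports.
Local Open Scope classical_set_scope.
Local Open Scope ring_scope.

(* The CPT value is monotone in the random variable: a pointwise larger [Y]
   has a larger gain [u+ Y] and a smaller loss [u- Y], hence larger (resp.
   smaller) tail probabilities, which the nondecreasing weights preserve.
   The argument of [T_pi Q^pi] is [c(s,a) + gamma * sum_s' P(s'|s,a) V^pi(s')],
   so improvement [V^pi' <= V^pi] alone already makes the argument of
   [T_pi' Q^pi'] pointwise smaller. *)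

(* Unlike [ge0_le_integral], no measurability of the integrands is required. *)
Lemma ge0_le_integral_nonmeasurable d (T : measurableType d) (R : realType)
    (mu : {measure set T -> \bar R}) (D : set T) (f g : T -> \bar R) :
  (forall x, D x -> 0 <= f x)%E -> (forall x, D x -> f x <= g x)%E ->
  (\int[mu]_(x in D) f x <= \int[mu]_(x in D) g x)%E.
Proof.
move=> f0 fg.
have g0 x : D x -> (0 <= g x)%E by move=> Dx; exact: le_trans (f0 x Dx) (fg x Dx).
rewrite !ge0_integralE//.
apply/ge_ereal_sup => _ [h hf <-]; apply: ereal_sup_ubound; exists h => //= x.
exact: le_trans (hf x) (lee_restrict _ _).
Qed.

Lemma measurable_superlevel d (T : measurableType d) (R : realType)
    (f : T -> R) (y : R) :
  measurable_fun setT f -> measurable [set x | y < f x].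
Proof.
move=> mf; rewrite -preimage_itvoy -[_ @^-1` _]setTI.
exact: mf measurableT _ (measurable_itv _).
Qed.

Section FineProbability.
Context d (T : measurableType d) (R : realType) (P : probability T R).

Lemma fine_probability_ge0_le1 (B : set T) :
  measurable B -> 0 <= fine (P B) <= 1.
Proof.
move=> mB; rewrite fine_ge0 ?measure_ge0//=.
by rewrite -lee_fin fineK ?fin_num_measure ?probability_le1.
Qed.

Lemma le_fine_probability (A B : set T) :
  measurable A -> measurable B -> A `<=` B -> fine (P A) <= fine (P B).
Proof.
move=> mA mB AB; apply: fine_le; rewrite ?fin_num_measure//.
by apply: le_measure; rewrite ?inE.
Qed.

End FineProbability.

Section UtilityMonotone.
Context (R : realType).

Lemma utility_pos_nondecreasing (u : R -> R) :
  utility_pos u -> {homo u : x y / x <= y}.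
Proof.
move=> [_ u_ge0 u_le0 u_mono] x y xy.
have [x_le0|x_gt0] := leP x 0; first by rewrite u_le0 ?u_ge0.
exact: u_mono.
Qed.

Lemma utility_neg_nonincreasing (u : R -> R) :
  utility_neg u -> {homo u : x y /~ x <= y}.
Proof.
move=> [_ u_ge0 u_eq0 u_mono] x y xy.
have [x_ge0|x_lt0] := leP 0 x; first by rewrite u_eq0 ?u_ge0.
exact: u_mono.
Qed.

End UtilityMonotone.

Section CptMonotone.
Context d (T : measurableType d) (R : realType) (P : probability T R).

Lemma le_weighted_tail_integral (w : R -> R) (X1 X2 : T -> R) :
  weighting w -> measurable_fun setT X1 -> measurable_fun setT X2 ->
  (forall t, X1 t <= X2 t) ->
  (\int[lebesgue_measure]_(z in `[0%R, +oo[%classic)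
      (w (fine (P [set t | z < X1 t])))%:E
   <= \int[lebesgue_measure]_(z in `[0%R, +oo[%classic)
      (w (fine (P [set t | z < X2 t])))%:E)%E.
Proof.
move=> [w01 _ w_mono _ _] mX1 mX2 X12.
apply: ge0_le_integral_nonmeasurable => z _.
  by rewrite lee_fin; case/andP: (w01 _ (fine_probability_ge0_le1 P
    (measurable_superlevel z mX1))).
have /andP[p1_ge0 _] := fine_probability_ge0_le1 P (measurable_superlevel z mX1).
have /andP[_ p2_le1] := fine_probability_ge0_le1 P (measurable_superlevel z mX2).
rewrite lee_fin; apply: w_mono => //.
apply: le_fine_probability; try exact: measurable_superlevel.
by move=> t /= /lt_le_trans; apply.
Qed.

Lemma le_rho_cpt (up um wp wm : R -> R) (Y1 Y2 : T -> R) :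
  utility_pos up -> utility_neg um -> weighting wp -> weighting wm ->
  measurable_fun setT Y1 -> measurable_fun setT Y2 -> (forall t, Y1 t <= Y2 t) ->
  (rho_cpt P up um wp wm Y1 <= rho_cpt P up um wp wm Y2)%E.
Proof.
move=> hup hum hwp hwm mY1 mY2 Y12.
have measurable_utility (u : R -> R) (Y : T -> R) : continuous u ->
    measurable_fun setT Y -> measurable_fun setT (u \o Y).
  by move=> cu mY; apply: measurableT_comp => //; exact: continuous_measurable_fun.
have [cup _ _ _] := hup; have [cum _ _ _] := hum.
apply: leeB.
- apply: (@le_weighted_tail_integral _ (up \o Y1) (up \o Y2)) => //.
  + exact: measurable_utility.
  + exact: measurable_utility.
  + by move=> t; exact: utility_pos_nondecreasing.
- apply: (@le_weighted_tail_integral _ (um \o Y2) (um \o Y1)) => //.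
  + exact: measurable_utility.
  + exact: measurable_utility.
  + by move=> t; exact: utility_neg_nonincreasing.
Qed.

Lemma le_cpt_T (up um wp wm : R -> R) (S A : finType) (Pt : S -> A -> S -> R)
    (c : S -> A -> T -> R) (gamma : R) (pi pi' Q Q' : S -> A -> R) :
  utility_pos up -> utility_neg um -> weighting wp -> weighting wm ->
  is_transition Pt -> (forall s a, measurable_fun setT (c s a)) -> 0 <= gamma ->
  (forall s, cpt_V pi' Q' s <= cpt_V pi Q s) ->
  forall s a, (cpt_T P up um wp wm Pt c gamma pi' Q' s a
               <= cpt_T P up um wp wm Pt c gamma pi Q s a)%E.
Proof.
move=> hup hum hwp hwm hPt mc gamma_ge0 leV s a.
apply: le_rho_cpt => //; try by apply: measurable_funD => //; exact: measurable_cst.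
move=> t; rewrite lerD2l; apply: ler_wpM2l => //.
apply: ler_sum => s' _; apply: ler_wpM2l; first by have [] := hPt s a.
exact: leV.
Qed.

End CptMonotone.

Theorem proposition2
  (d : measure_display) (T : measurableType d) (R : realType) (P : probability T R)
  (S A : finType) (rho0 : S -> R) (Pt : S -> A -> S -> R)
  (c : S -> A -> T -> R) (gamma : R)
  (up um wp wm : R -> R) (pi pi' : S -> A -> R) (Qpi Qpi' : S -> A -> R) :
  (forall s, 0 <= rho0 s) -> \sum_(s : S) rho0 s = 1 ->
  is_transition Pt ->
  (forall s a, measurable_fun setT (c s a)) ->
  0 < gamma <= 1 ->
  utility_pos up -> utility_neg um -> weighting wp -> weighting wm ->
  (forall s a (k : R),
     P.-integrable setT (fun t => (up (c s a t + k))%:E) /\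
     P.-integrable setT (fun t => (um (c s a t + k))%:E)) ->
  is_policy pi -> is_policy pi' ->
  is_cpt_Q P up um wp wm Pt c gamma pi Qpi ->
  is_cpt_Q P up um wp wm Pt c gamma pi' Qpi' ->
  (forall s a, Qpi' s a <= Qpi s a) ->
  (forall s, cpt_V pi' Qpi' s <= cpt_V pi Qpi s) ->
  forall s a,
    (cpt_T P up um wp wm Pt c gamma pi' Qpi' s a
     <= cpt_T P up um wp wm Pt c gamma pi Qpi s a)%E.
Proof.
move=> _ _ hPt mc /andP[gamma_gt0 _] hup hum hwp hwm _ _ _ _ _ _ improved.
exact: le_cpt_T hup hum hwp hwm hPt mc (ltW gamma_gt0) improved.
Qed.
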